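(* Let $k\ge 2$ and let $p,q$ be real polynomials with $\deg p=k$, $\deg q=k-1$, whose roots are real, simple and strictly interlacing; let $R=q/p$, viewed as a holomorphic map $\mathbb{C}P^1\to\mathbb{C}P^1$. For $\alpha\in\mathbb{R}$ let $p_1(\alpha)<\dots<p_k(\alpha)$ be the (real, simple) roots of $p+\alpha q$, and for $j=1,\dots,k-1$ let $D_j(\alpha)$ be the open disk having $[p_j(\alpha),p_{j+1}(\alpha)]$ as a diameter. Then for every $\alpha\in\mathbb{R}$ and every $j\in\{1,\dots,k-1\}$, $D_j(\alpha)$ is a maximal real univalent disk of $R$: $R$ is injective on $D_j(\alpha)$, and there is no real open disk in $\mathbb{C}P^1$ strictly containing $D_j(\alpha)$ on which $R$ is injective.
   Context: A disk in $\mathbb{C}P^1$ (an open disk, an open half-plane, or the complement of a closed disk together with $\infty$) is called real if it is invariant under complex conjugation. ''Strictly interlacing'' means $p_1<q_1<p_2<\dots<q_{k-1}<p_k$ for the roots $p_i$ of $p$ and $q_i$ of $q$. *)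

From Stdlib Require Import Reals List.
Open Scope R_scope.

Record C := mkC { re : R; im : R }.
Definition Cadd (z w : C) : C := mkC (re z + re w) (im z + im w).
Definition Csub (z w : C) : C := mkC (re z - re w) (im z - im w).
Definition Cmul (z w : C) : C :=
  mkC (re z * re w - im z * im w) (re z * im w + im z * re w).
Definition Cconj (z : C) : C := mkC (re z) (- im z).
Definition Cnorm2 (z : C) : R := re z * re z + im z * im z.
Definition Cinv (z : C) : C := mkC (re z / Cnorm2 z) (- im z / Cnorm2 z).
Definition Cdiv (z w : C) : C := Cmul z (Cinv w).
Definition RtoC (x : R) : C := mkC x 0.

(* ---------- the Riemann sphere CP^1 = C ∪ {∞}, with None = ∞ ---------- *)
Definition CP1 := option C.
Definition CP1conj (x : CP1) : CP1 :=
  match x with Some z => Some (Cconj z) | None => None end.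

(* ---------- real polynomials: coefficient lists, lowest degree first ---------- *)
Definition rpoly := list R.
Fixpoint peval (p : rpoly) (x : R) : R :=
  match p with nil => 0 | a :: p' => a + x * peval p' x end.
Fixpoint pevalC (p : rpoly) (z : C) : C :=
  match p with nil => RtoC 0 | a :: p' => Cadd (RtoC a) (Cmul z (pevalC p' z)) end.
(* leading coefficient (meaningful for normalized lists) *)
Definition lead (p : rpoly) : R := last p 0.
Definition has_degree (p : rpoly) (k : nat) : Prop :=
  length p = S k /\ lead p <> 0.

Definition sorted_roots (f : R -> R) (n : nat) (rs : list R) : Prop :=
  length rs = n /\
  (forall i, (S i < n)%nat -> nth i rs 0 < nth (S i) rs 0) /\
  (forall i, (i < n)%nat -> f (nth i rs 0) = 0).

Definition strictly_interlacing (p q : rpoly) (k : nat) : Prop :=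
  exists ps qs,
    sorted_roots (peval p) k ps /\ sorted_roots (peval q) (k - 1) qs /\
    forall i, (S i < k)%nat ->
      nth i ps 0 < nth i qs 0 /\ nth i qs 0 < nth (S i) ps 0.

(* The rational function q/p as a map CP^1 -> CP^1 (p, q normalized, coprime). *)
Definition ratmap (q p : rpoly) (x : CP1) : CP1 :=
  match x with
  | Some z =>
      if Req_EM_T (Cnorm2 (pevalC p z)) 0 then None
      else Some (Cdiv (pevalC q z) (pevalC p z))
  | None =>
      if Nat.ltb (length q) (length p) then Some (RtoC 0)
      else if Nat.eqb (length q) (length p) then Some (RtoC (lead q / lead p))
      else None
  end.

Definition open_disk (c : C) (r : R) : CP1 -> Prop :=
  fun x => match x with Some z => Cnorm2 (Csub z c) < r * r | None => False end.
Definition open_halfplane (a1 a2 t : R) : CP1 -> Prop :=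
  fun x => match x with Some z => a1 * re z + a2 * im z > t | None => False end.
Definition outer_disk (c : C) (r : R) : CP1 -> Prop :=
  fun x => match x with Some z => Cnorm2 (Csub z c) > r * r | None => True end.

Definition is_disk (S : CP1 -> Prop) : Prop :=
  (exists c r, 0 < r /\ forall x, S x <-> open_disk c r x) \/
  (exists a1 a2 t, (a1 <> 0 \/ a2 <> 0) /\ forall x, S x <-> open_halfplane a1 a2 t x) \/
  (exists c r, 0 < r /\ forall x, S x <-> outer_disk c r x).

Definition is_real_disk (S : CP1 -> Prop) : Prop :=
  is_disk S /\ forall x, S x <-> S (CP1conj x).

Definition injective_on (f : CP1 -> CP1) (S : CP1 -> Prop) : Prop :=
  forall x y, S x -> S y -> f x = f y -> x = y.

Definition maximal_real_univalent_disk (f : CP1 -> CP1) (D : CP1 -> Prop) : Prop :=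
  is_real_disk D /\ injective_on f D /\
  ~ (exists S, is_real_disk S /\ (forall x, D x -> S x) /\ (exists x, S x /\ ~ D x)
              /\ injective_on f S).

Definition diam_disk (a b : R) : CP1 -> Prop :=
  open_disk (RtoC ((a + b) / 2)) ((b - a) / 2).

From Pilot Require Import Defs.
From Stdlib Require Import Reals List Arith Lra Lia Psatz.
Open Scope R_scope.
Import ListNotations.
(* [Reals] exports the binomial coefficient [C], which hides the complex numbers of [Defs]. *)
Import Defs.

(* Let P = p + alpha q.  The roots s_1 < ... < s_k of P are real and simple, and they
   interlace with the roots of p, so q changes sign between consecutive ones.  Hence the
   partial fraction expansion q / P = sum_i d_i / (z - s_i) has all d_i of one sign, and
   R(z) = R(w) iff (q / P)(z) = (q / P)(w).  On the disk D with diameter [s_j, s_(j+1)]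
   this sum is injective: for z <> w its difference quotient is
   sum_i d_i / ((z - s_i)(w - s_i)), which is a positive real when z and w are real, and
   otherwise, after multiplication by (z - s_(j+1))(w - s_(j+1)), has imaginary part of
   the sign opposite to Im z.
   A real disk strictly larger than D contains an endpoint of [s_j, s_(j+1)], where
   R = -1/alpha, and a real point t beyond it.  If P(t) = 0 then R(t) = -1/alpha too;
   otherwise q(x) P(t) - q(t) P(x) changes sign on [s_j, s_(j+1)], so R takes the value
   R(t) inside D as well. *)

(** * Complex arithmetic *)

Ltac Cunf := unfold Cdiv, Cinv, Cadd, Csub, Cmul, Cconj, Cnorm2, RtoC in *; simpl in *.

Lemma C_ext (z w : C) : re z = re w -> im z = im w -> z = w.
Proof. destruct z, w; simpl; intros; subst; reflexivity. Qed.

Ltac Cring := apply C_ext; Cunf; ring.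

Lemma Cnorm2_mul (z w : C) : Cnorm2 (Cmul z w) = Cnorm2 z * Cnorm2 w.
Proof. Cunf; ring. Qed.

Lemma Cnorm2_eq0 (z : C) : Cnorm2 z = 0 -> z = RtoC 0.
Proof. destruct z as [a b]; Cunf; intros; apply C_ext; simpl; nra. Qed.

Lemma Cinv_mul (z w : C) : Cnorm2 z <> 0 -> Cnorm2 w <> 0 ->
  Cinv (Cmul z w) = Cmul (Cinv z) (Cinv w).
Proof.
  intros Hz Hw. unfold Cinv at 1; rewrite Cnorm2_mul.
  destruct z as [a b], w as [c d]; Cunf; apply C_ext; simpl; field; auto.
Qed.

Lemma Cmul_cancel_l (w z z' : C) : Cnorm2 w <> 0 -> Cmul w z = Cmul w z' -> z = z'.
Proof.
  intros Hw E. destruct w as [a b], z as [c d], z' as [c' d'].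
  pose proof (f_equal re E) as E1; pose proof (f_equal im E) as E2. Cunf.
  apply C_ext; simpl; apply (Rmult_eq_reg_l (a * a + b * b)); auto.
  - transitivity (a * (a * c - b * d) + b * (a * d + b * c)); [ring|].
    rewrite E1, E2; ring.
  - transitivity (a * (a * d + b * c) - b * (a * c - b * d)); [ring|].
    rewrite E1, E2; ring.
Qed.

Lemma pevalC_RtoC (l : rpoly) (x : R) : pevalC l (RtoC x) = RtoC (peval l x).
Proof. induction l as [|a l IH]; simpl; [reflexivity|]. rewrite IH; Cring. Qed.

(** * Real polynomials *)

Fixpoint ruffini (r : R) (l : rpoly) : rpoly :=
  match l with
  | nil => nil
  | a :: l' => match l' with nil => nil | _ => peval l' r :: ruffini r l' end
  end.

Lemma pevalC_ruffini (r : R) (l : rpoly) (z : C) :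
  pevalC l z = Cadd (RtoC (peval l r)) (Cmul (Csub z (RtoC r)) (pevalC (ruffini r l) z)).
Proof.
  induction l as [|a [|b l] IH]; [Cring|Cring|].
  change (pevalC (a :: b :: l) z) with (Cadd (RtoC a) (Cmul z (pevalC (b :: l) z))).
  change (ruffini r (a :: b :: l)) with (peval (b :: l) r :: ruffini r (b :: l)).
  rewrite IH. cbn [peval pevalC]. Cring.
Qed.

Lemma peval_ruffini (r : R) (l : rpoly) (x : R) :
  peval l x = peval l r + (x - r) * peval (ruffini r l) x.
Proof.
  pose proof (f_equal re (pevalC_ruffini r l (RtoC x))) as E.
  rewrite !pevalC_RtoC in E. Cunf. lra.
Qed.

Lemma length_ruffini (r : R) (l : rpoly) : length (ruffini r l) = pred (length l).
Proof.
  induction l as [|a [|b l] IH]; [reflexivity|reflexivity|].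
  change (S (length (ruffini r (b :: l))) = S (length l)). rewrite IH. reflexivity.
Qed.

Lemma lead_cons (a : R) (l : rpoly) : l <> nil -> lead (a :: l) = lead l.
Proof. destruct l; [congruence|reflexivity]. Qed.

Lemma lead_ruffini (r : R) (l : rpoly) : (2 <= length l)%nat -> lead (ruffini r l) = lead l.
Proof.
  induction l as [|a [|b l] IH]; intros H; cbn [length] in H; try lia.
  change (ruffini r (a :: b :: l)) with (peval (b :: l) r :: ruffini r (b :: l)).
  rewrite (lead_cons a) by discriminate.
  destruct l as [|c l]; [unfold lead; simpl; ring|].
  rewrite lead_cons; [apply IH; cbn [length]; lia|].
  intro E. apply (f_equal (@length R)) in E. rewrite length_ruffini in E. discriminate.
Qed.

Lemma ruffini_root (r r' : R) (l : rpoly) :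
  peval l r = 0 -> peval l r' = 0 -> r' <> r -> peval (ruffini r l) r' = 0.
Proof.
  intros H1 H2 H3. pose proof (peval_ruffini r l r') as E. rewrite H1, H2, Rplus_0_l in E.
  symmetry in E. apply Rmult_integral in E as [E|E]; [lra|exact E].
Qed.

Fixpoint cprod (z : C) (rs : list R) : C :=
  match rs with nil => RtoC 1 | r :: rs' => Cmul (Csub z (RtoC r)) (cprod z rs') end.
Fixpoint rprod (x : R) (rs : list R) : R :=
  match rs with nil => 1 | r :: rs' => (x - r) * rprod x rs' end.

Lemma cprod_RtoC (x : R) (rs : list R) : cprod (RtoC x) rs = RtoC (rprod x rs).
Proof. induction rs as [|r rs IH]; simpl; [reflexivity|]. rewrite IH; Cring. Qed.

Lemma cprod_app (z : C) (l1 l2 : list R) :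
  cprod z (l1 ++ l2) = Cmul (cprod z l1) (cprod z l2).
Proof. induction l1 as [|r l1 IH]; simpl; [Cring|]. rewrite IH; Cring. Qed.

Lemma rprod_app (x : R) (l1 l2 : list R) : rprod x (l1 ++ l2) = rprod x l1 * rprod x l2.
Proof. induction l1 as [|r l1 IH]; simpl; [ring|]. rewrite IH; ring. Qed.

Lemma rprod_eq0 (x : R) (rs : list R) : rprod x rs = 0 <-> In x rs.
Proof.
  induction rs as [|r rs IH]; simpl; [split; [lra|contradiction]|].
  split.
  - intros E. apply Rmult_integral in E as [E|E]; [left; lra|right; apply IH, E].
  - intros [->|H]; [ring|]. rewrite (proj2 IH H); ring.
Qed.

Lemma Cnorm2_cprod (z : C) (rs : list R) :
  (forall r, In r rs -> Cnorm2 (Csub z (RtoC r)) <> 0) -> Cnorm2 (cprod z rs) <> 0.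
Proof.
  induction rs as [|r rs IH]; intros H; simpl.
  - Cunf; lra.
  - rewrite Cnorm2_mul. apply Rmult_integral_contrapositive; split.
    + apply H; left; reflexivity.
    + apply IH; intros; apply H; right; assumption.
Qed.

Lemma pevalC_divide_roots (n m : nat) (l : rpoly) (rs : list R) :
  length l = S (n + m) -> length rs = n -> NoDup rs ->
  (forall r, In r rs -> peval l r = 0) ->
  exists g, length g = S m /\ lead g = lead l /\
    forall z, pevalC l z = Cmul (cprod z rs) (pevalC g z).
Proof.
  revert m l rs; induction n as [|n IH]; intros m l rs Hl Hrs Hnd Hr.
  - destruct rs; [|discriminate]. exists l; repeat split; [exact Hl|]. intros z; simpl; Cring.
  - destruct rs as [|r rs]; [discriminate|]. injection Hrs as Hrs.
    apply NoDup_cons_iff in Hnd as [Hnin Hnd].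
    destruct (IH m (ruffini r l) rs) as [g [Hg1 [Hg2 Hg3]]]; auto.
    + rewrite length_ruffini, Hl; reflexivity.
    + intros r' Hr'. apply ruffini_root; [apply Hr; left; reflexivity|apply Hr; right; exact Hr'|].
      intros ->; contradiction.
    + exists g; repeat split; [exact Hg1| |].
      * rewrite Hg2. apply lead_ruffini. lia.
      * intros z. rewrite (pevalC_ruffini r l z), Hg3, (Hr r (or_introl eq_refl)). simpl. Cring.
Qed.

Lemma peval_factor (n : nat) (l : rpoly) (rs : list R) :
  length l = S n -> length rs = n -> NoDup rs -> (forall r, In r rs -> peval l r = 0) ->
  (forall z, pevalC l z = Cmul (cprod z rs) (RtoC (lead l))) /\
  (forall x, peval l x = rprod x rs * lead l).
Proof.
  intros H1 H2 H3 H4.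
  destruct (pevalC_divide_roots n 0 l rs) as [[|c [|]] [G1 [G2 G3]]];
    try rewrite Nat.add_0_r; auto; try discriminate.
  assert (HC : forall z, pevalC l z = Cmul (cprod z rs) (RtoC (lead l))).
  { intros z. rewrite G3, <- G2. unfold lead; simpl. f_equal. Cring. }
  split; [exact HC|]. intros x.
  pose proof (f_equal re (HC (RtoC x))) as E. rewrite pevalC_RtoC, cprod_RtoC in E. Cunf. lra.
Qed.

Lemma pevalC_vanish (n : nat) (l : rpoly) (rs : list R) :
  (length l <= n)%nat -> length rs = n -> NoDup rs ->
  (forall r, In r rs -> peval l r = 0) -> forall z, pevalC l z = RtoC 0.
Proof.
  revert l rs; induction n as [|n IH]; intros l rs Hl Hrs Hnd Hr z.
  - destruct l; [reflexivity|simpl in Hl; lia].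
  - destruct rs as [|r rs]; [discriminate|]. injection Hrs as Hrs.
    apply NoDup_cons_iff in Hnd as [Hnin Hnd].
    rewrite (pevalC_ruffini r l z), (Hr r (or_introl eq_refl)), (IH (ruffini r l) rs); auto.
    + Cring.
    + rewrite length_ruffini; lia.
    + intros r' Hr'. apply ruffini_root; [apply Hr; left; reflexivity|apply Hr; right; exact Hr'|].
      intros ->; contradiction.
Qed.

Fixpoint padd (l m : rpoly) : rpoly :=
  match l, m with
  | nil, _ => m
  | _, nil => l
  | a :: l', b :: m' => (a + b) :: padd l' m'
  end.
Definition pscale (c : R) (l : rpoly) : rpoly := map (Rmult c) l.

Lemma pevalC_padd (l m : rpoly) (z : C) :
  pevalC (padd l m) z = Cadd (pevalC l z) (pevalC m z).
Proof.
  revert m; induction l as [|a l IH]; intros [|b m]; simpl; try Cring.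
  rewrite IH; Cring.
Qed.

Lemma peval_padd (l m : rpoly) (x : R) : peval (padd l m) x = peval l x + peval m x.
Proof.
  pose proof (f_equal re (pevalC_padd l m (RtoC x))) as E.
  rewrite !pevalC_RtoC in E. exact E.
Qed.

Lemma length_padd (l m : rpoly) : length (padd l m) = Nat.max (length l) (length m).
Proof. revert m; induction l as [|a l IH]; intros [|b m]; simpl; auto. Qed.

Lemma lead_padd (l m : rpoly) : (length m < length l)%nat -> lead (padd l m) = lead l.
Proof.
  revert m; induction l as [|a l IH]; intros [|b m] H; simpl in H; try lia; [reflexivity|].
  change (padd (a :: l) (b :: m)) with ((a + b) :: padd l m).
  destruct l as [|c l]; [simpl in H; lia|].
  rewrite (lead_cons (a + b)), (lead_cons a) by (discriminate || destruct m; discriminate).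
  apply IH; lia.
Qed.

Lemma pevalC_pscale (c : R) (l : rpoly) (z : C) :
  pevalC (pscale c l) z = Cmul (RtoC c) (pevalC l z).
Proof.
  induction l as [|a l IH]; [Cring|].
  change (pevalC (c * a :: pscale c l) z = Cmul (RtoC c) (pevalC (a :: l) z)).
  cbn [pevalC]. rewrite IH. Cring.
Qed.

Lemma peval_pscale (c : R) (l : rpoly) (x : R) : peval (pscale c l) x = c * peval l x.
Proof.
  pose proof (f_equal re (pevalC_pscale c l (RtoC x))) as E.
  rewrite !pevalC_RtoC in E. Cunf. lra.
Qed.

Lemma length_pscale (c : R) (l : rpoly) : length (pscale c l) = length l.
Proof. apply length_map. Qed.

Definition is_polyfun (n : nat) (f : C -> C) : Prop :=
  exists l, (length l <= n)%nat /\ forall z, f z = pevalC l z.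

Lemma is_polyfun_add (n : nat) (f g : C -> C) :
  is_polyfun n f -> is_polyfun n g -> is_polyfun n (fun z => Cadd (f z) (g z)).
Proof.
  intros [l [Hl Hf]] [m [Hm Hg]]. exists (padd l m); split.
  - rewrite length_padd; lia.
  - intros z; rewrite pevalC_padd, Hf, Hg; reflexivity.
Qed.

Lemma is_polyfun_scale (n : nat) (c : R) (f : C -> C) :
  is_polyfun n f -> is_polyfun n (fun z => Cmul (RtoC c) (f z)).
Proof.
  intros [l [Hl Hf]]. exists (pscale c l); split.
  - rewrite length_pscale; exact Hl.
  - intros z; rewrite pevalC_pscale, Hf; reflexivity.
Qed.

Lemma is_polyfun_cprod (rs : list R) : is_polyfun (S (length rs)) (fun z => cprod z rs).
Proof.
  induction rs as [|r rs [l [Hl Hf]]].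
  - exists [1]; split; [auto|]. intros z; simpl; Cring.
  - exists (padd (pscale (- r) l) (0 :: l)); split.
    + rewrite length_padd, length_pscale; simpl; lia.
    + intros z. rewrite pevalC_padd, pevalC_pscale; simpl. rewrite Hf. Cring.
Qed.

Fixpoint Csumn (f : nat -> C) (n : nat) : C :=
  match n with O => RtoC 0 | S n' => Cadd (Csumn f n') (f n') end.
Fixpoint Rsumn (f : nat -> R) (n : nat) : R :=
  match n with O => 0 | S n' => Rsumn f n' + f n' end.

Lemma is_polyfun_Csumn (n m : nat) (f : nat -> C -> C) :
  (forall i, (i < m)%nat -> is_polyfun n (f i)) ->
  is_polyfun n (fun z => Csumn (fun i => f i z) m).
Proof.
  induction m as [|m IH]; intros H; simpl.
  - exists nil; split; [simpl; lia|reflexivity].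
  - apply (is_polyfun_add n (fun z => Csumn (fun i => f i z) m)); auto.
Qed.

Lemma Csumn_ext (f g : nat -> C) (n : nat) :
  (forall i, (i < n)%nat -> f i = g i) -> Csumn f n = Csumn g n.
Proof.
  induction n as [|n IH]; intros H; simpl; [reflexivity|].
  rewrite IH by (intros; apply H; lia). rewrite H by lia. reflexivity.
Qed.

Lemma Rsumn_ext (f g : nat -> R) (n : nat) :
  (forall i, (i < n)%nat -> f i = g i) -> Rsumn f n = Rsumn g n.
Proof.
  induction n as [|n IH]; intros H; simpl; [reflexivity|].
  rewrite IH by (intros; apply H; lia). rewrite H by lia. reflexivity.
Qed.

Lemma Csumn_single (f : nat -> C) (n m : nat) : (m < n)%nat ->
  (forall i, (i < n)%nat -> i <> m -> f i = RtoC 0) -> Csumn f n = f m.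
Proof.
  intros Hm H. induction n as [|n IH]; [lia|]. simpl.
  destruct (Nat.eq_dec m n) as [->|Hne].
  - assert (Z : forall k, (k <= n)%nat -> Csumn f k = RtoC 0).
    { induction k as [|k IHk]; intros Hk; simpl; [reflexivity|].
      rewrite IHk, H by lia. Cring. }
    rewrite Z by lia. Cring.
  - rewrite IH by (lia || (intros; apply H; lia)). rewrite (H n) by lia. Cring.
Qed.

Lemma re_Csumn (f : nat -> C) (n : nat) : re (Csumn f n) = Rsumn (fun i => re (f i)) n.
Proof. induction n as [|n IH]; simpl; [reflexivity|]. rewrite IH; reflexivity. Qed.

Lemma im_Csumn (f : nat -> C) (n : nat) : im (Csumn f n) = Rsumn (fun i => im (f i)) n.
Proof. induction n as [|n IH]; simpl; [reflexivity|]. rewrite IH; reflexivity. Qed.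

Lemma Cmul_Csumn (w : C) (f : nat -> C) (n : nat) :
  Cmul w (Csumn f n) = Csumn (fun i => Cmul w (f i)) n.
Proof. induction n as [|n IH]; simpl; [Cring|]. rewrite <- IH; Cring. Qed.

Lemma Csub_Csumn (f g : nat -> C) (n : nat) :
  Csub (Csumn f n) (Csumn g n) = Csumn (fun i => Csub (f i) (g i)) n.
Proof. induction n as [|n IH]; simpl; [Cring|]. rewrite <- IH; Cring. Qed.

Lemma Rsumn_scal (c : R) (f : nat -> R) (n : nat) :
  Rsumn (fun i => c * f i) n = c * Rsumn f n.
Proof. induction n as [|n IH]; simpl; [ring|]. rewrite IH; ring. Qed.

Lemma Rsumn_pos (f : nat -> R) (n j : nat) :
  (forall i, (i < n)%nat -> 0 <= f i) -> (j < n)%nat -> 0 < f j -> 0 < Rsumn f n.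
Proof.
  intros H Hj Hf.
  assert (Hge : forall m, (m <= n)%nat -> 0 <= Rsumn f m).
  { induction m as [|m IH]; intros Hm; simpl; [lra|].
    pose proof (H m ltac:(lia)); pose proof (IH ltac:(lia)); lra. }
  induction n as [|n IH]; [lia|]. simpl.
  destruct (Nat.eq_dec j n) as [->|Hne].
  - pose proof (Hge n (le_S _ _ (le_n n))); lra.
  - pose proof (IH ltac:(intros; apply H; lia) ltac:(lia) ltac:(intros; apply Hge; lia)).
    pose proof (H n ltac:(lia)); lra.
Qed.

(** * Lagrange interpolation and partial fractions *)

Definition rm (i : nat) (l : list R) : list R := firstn i l ++ skipn (S i) l.

Lemma rm_decomp (i : nat) (l : list R) : (i < length l)%nat ->
  l = firstn i l ++ nth i l 0 :: skipn (S i) l.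
Proof. intros H. symmetry. apply firstn_skipn_middle, nth_error_nth'; exact H. Qed.

Lemma length_rm (i : nat) (l : list R) : (i < length l)%nat -> length (rm i l) = pred (length l).
Proof.
  intros H. rewrite (rm_decomp i l H) at 2. unfold rm. rewrite !length_app. simpl. lia.
Qed.

Lemma In_rm (i : nat) (l : list R) (y : R) : (i < length l)%nat ->
  In y l -> y <> nth i l 0 -> In y (rm i l).
Proof.
  intros H Hy Hne. rewrite (rm_decomp i l H) in Hy. unfold rm.
  apply in_app_or in Hy as [Hy|[Hy|Hy]]; apply in_or_app; auto. congruence.
Qed.

Lemma notIn_rm (i : nat) (l : list R) : NoDup l -> (i < length l)%nat -> ~ In (nth i l 0) (rm i l).
Proof. intros Hnd H. rewrite (rm_decomp i l H) in Hnd. exact (NoDup_remove_2 _ _ _ Hnd). Qed.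

Lemma rm_app (l1 l2 : list R) (x : R) : rm (length l1) (l1 ++ x :: l2) = l1 ++ l2.
Proof.
  induction l1 as [|y l1 IH]; [reflexivity|]. unfold rm in *.
  change (y :: (firstn (length l1) (l1 ++ x :: l2) ++ skipn (S (length l1)) (l1 ++ x :: l2))
          = y :: (l1 ++ l2)).
  rewrite IH. reflexivity.
Qed.

Lemma cprod_rm (i : nat) (l : list R) (z : C) : (i < length l)%nat ->
  cprod z l = Cmul (Csub z (RtoC (nth i l 0))) (cprod z (rm i l)).
Proof.
  intros H. rewrite (rm_decomp i l H) at 1. unfold rm. rewrite !cprod_app. simpl. Cring.
Qed.

Definition lagrange_coef (q : rpoly) (s : list R) (i : nat) : R :=
  peval q (nth i s 0) / rprod (nth i s 0) (rm i s).

Lemma pevalC_lagrange (q : rpoly) (s : list R) :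
  (length q <= length s)%nat -> NoDup s ->
  forall z, pevalC q z =
    Csumn (fun i => Cmul (RtoC (lagrange_coef q s i)) (cprod z (rm i s))) (length s).
Proof.
  intros Hq Hnd z.
  set (F := fun z => Csumn (fun i => Cmul (RtoC (lagrange_coef q s i)) (cprod z (rm i s))) (length s)).
  assert (Hpoly : is_polyfun (length s) (fun z => Cadd (pevalC q z) (Cmul (RtoC (-1)) (F z)))).
  { apply is_polyfun_add; [exists q; auto|].
    apply is_polyfun_scale, is_polyfun_Csumn. intros i Hi. apply is_polyfun_scale.
    replace (length s) with (S (length (rm i s))) by (rewrite length_rm; lia).
    apply is_polyfun_cprod. }
  destruct Hpoly as [l [Hl Hfl]].
  assert (Hroots : forall r, In r s -> peval l r = 0).
  { intros r Hr. destruct (In_nth s r 0 Hr) as [m [Hm <-]].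
    assert (Hsingle : F (RtoC (nth m s 0)) = RtoC (peval q (nth m s 0))).
    { unfold F. rewrite (Csumn_single _ _ m Hm).
      - rewrite cprod_RtoC. unfold lagrange_coef.
        assert (rprod (nth m s 0) (rm m s) <> 0)
          by (rewrite rprod_eq0; apply notIn_rm; auto).
        Cunf. apply C_ext; simpl; field; auto.
      - intros i Hi Hne. rewrite cprod_RtoC, (proj2 (rprod_eq0 _ _)); [Cring|].
        apply In_rm; [exact Hi|apply nth_In; exact Hm|].
        intros E. apply Hne. apply (proj1 (NoDup_nth s 0) Hnd); auto. }
    pose proof (f_equal re (Hfl (RtoC (nth m s 0)))) as E.
    rewrite Hsingle, !pevalC_RtoC in E. Cunf. lra. }
  pose proof (Hfl z) as E. rewrite (pevalC_vanish (length s) l s Hl eq_refl Hnd Hroots) in E.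
  fold (F z). apply C_ext.
  - apply (f_equal re) in E. Cunf. lra.
  - apply (f_equal im) in E. Cunf. lra.
Qed.

Definition pfsum (d : nat -> R) (s : list R) (n : nat) (z : C) : C :=
  Csumn (fun i => Cmul (RtoC (d i)) (Cinv (Csub z (RtoC (nth i s 0))))) n.

Lemma pevalC_partial_fractions (q : rpoly) (s : list R) (z : C) :
  (length q <= length s)%nat -> NoDup s ->
  (forall i, (i < length s)%nat -> Cnorm2 (Csub z (RtoC (nth i s 0))) <> 0) ->
  pevalC q z = Cmul (cprod z s) (pfsum (lagrange_coef q s) s (length s) z).
Proof.
  intros Hq Hnd Hz. rewrite (pevalC_lagrange q s Hq Hnd z). unfold pfsum.
  rewrite Cmul_Csumn. apply Csumn_ext. intros i Hi. rewrite (cprod_rm i s z Hi).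
  specialize (Hz i Hi). revert Hz.
  generalize (Csub z (RtoC (nth i s 0))) (cprod z (rm i s)) (lagrange_coef q s i).
  intros [a b] [c1 c2] e H. Cunf. apply C_ext; simpl; field; exact H.
Qed.

(** * Partial fraction sums on a disk with diameter between two poles *)

Lemma diam_disk_iff (a b : R) (z : C) :
  diam_disk a b (Some z) <-> (re z - a) * (re z - b) + im z * im z < 0.
Proof.
  destruct z as [X Y]. unfold diam_disk, open_disk. simpl.
  assert (E : Cnorm2 (Csub (mkC X Y) (RtoC ((a + b) / 2))) - (b - a) / 2 * ((b - a) / 2)
     = (X - a) * (X - b) + Y * Y) by (Cunf; field).
  split; intros; lra.
Qed.

Section DiamDisk.

Variables a b : R.
Hypothesis Hab : a < b.

Lemma diam_disk_re (z : C) : diam_disk a b (Some z) -> a < re z < b.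
Proof. rewrite diam_disk_iff. intros; split; nra. Qed.

Lemma diam_disk_pole_dist (z : C) (s : R) : diam_disk a b (Some z) -> s <= a \/ b <= s ->
  0 < (re z - s) * (re z - s) + im z * im z.
Proof.
  intros Hz Hs. pose proof (diam_disk_re z Hz). apply diam_disk_iff in Hz.
  destruct (Req_dec (im z) 0) as [E|E]; [rewrite E|]; nra.
Qed.

Lemma Cnorm2_pole_dist (z : C) (s : R) : diam_disk a b (Some z) -> s <= a \/ b <= s ->
  Cnorm2 (Csub z (RtoC s)) <> 0.
Proof.
  intros Hz Hs. pose proof (diam_disk_pole_dist z s Hz Hs). Cunf. rewrite Rminus_0_r. lra.
Qed.

Lemma cross_term_im_sign (s : R) (z1 z2 : C) :
  diam_disk a b (Some z1) -> diam_disk a b (Some z2) -> 0 < im z1 * im z2 -> s <= a \/ b <= s ->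
  let v := im z1 * im (Cmul (Cmul (Csub z1 (RtoC b)) (Csub z2 (RtoC b)))
                    (Cinv (Cmul (Csub z1 (RtoC s)) (Csub z2 (RtoC s))))) in
  v <= 0 /\ (s <= a -> v < 0).
Proof.
  intros D1 D2 HY Hs v.
  pose proof (diam_disk_pole_dist z1 s D1 Hs) as N1.
  pose proof (diam_disk_pole_dist z2 s D2 Hs) as N2.
  pose proof (diam_disk_re z1 D1) as B1. pose proof (diam_disk_re z2 D2) as B2.
  apply diam_disk_iff in D1, D2. destruct z1 as [X1 Y1], z2 as [X2 Y2]; cbn [re im] in *.
  set (A1 := (X1 - b) * (X1 - s) + Y1 * Y1).
  set (A2 := (X2 - b) * (X2 - s) + Y2 * Y2).
  assert (Ev : v = (b - s) * (A1 * Y1 * Y2 + Y1 * Y1 * A2) /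
                   (((X1 - s) * (X1 - s) + Y1 * Y1) * ((X2 - s) * (X2 - s) + Y2 * Y2))).
  { unfold v. rewrite Cinv_mul by (Cunf; lra). unfold A1, A2. Cunf. field; lra. }
  assert (Hpos : 0 < ((X1 - s) * (X1 - s) + Y1 * Y1) * ((X2 - s) * (X2 - s) + Y2 * Y2)) by nra.
  assert (Y1 * Y1 > 0) by nra.
  destruct (Rle_or_lt s a) as [Hsa|Hsa].
  - assert (A1 < 0) by (unfold A1; assert ((X1 - b) * (a - s) <= 0) by nra; nra).
    assert (A2 < 0) by (unfold A2; assert ((X2 - b) * (a - s) <= 0) by nra; nra).
    assert (Hn : (b - s) * (A1 * Y1 * Y2 + Y1 * Y1 * A2) < 0).
    { assert (A1 * (Y1 * Y2) < 0) by nra. assert (Y1 * Y1 * A2 < 0) by nra. nra. }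
    assert (v < 0) by (rewrite Ev; apply Rdiv_neg_pos; auto).
    split; [lra|auto].
  - split; [|intros; lra]. destruct Hs as [Hs|Hs]; [lra|].
    destruct (Req_dec s b) as [->|Hsb].
    + rewrite Ev, Rminus_diag, !Rmult_0_l. unfold Rdiv; lra.
    + assert (A1 > 0) by (unfold A1; nra). assert (A2 > 0) by (unfold A2; nra).
      assert (Hn : (b - s) * (A1 * Y1 * Y2 + Y1 * Y1 * A2) < 0).
      { assert (A1 * (Y1 * Y2) > 0) by nra. assert (Y1 * Y1 * A2 > 0) by nra. nra. }
      rewrite Ev. left. apply Rdiv_neg_pos; auto.
Qed.

Variables (d : nat -> R) (s : list R) (n : nat).
Hypothesis Hd : forall i, (i < n)%nat -> 0 < d i.
Hypothesis Hout : forall i, (i < n)%nat -> nth i s 0 <= a \/ b <= nth i s 0.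
Hypothesis Hleft : exists j, (j < n)%nat /\ nth j s 0 <= a.

Lemma im_pfsum (z : C) : im (pfsum d s n z) =
  - im z * Rsumn (fun i => d i / Cnorm2 (Csub z (RtoC (nth i s 0)))) n.
Proof.
  unfold pfsum. rewrite im_Csumn, <- Rsumn_scal. apply Rsumn_ext. intros i _.
  Cunf. unfold Rdiv. ring.
Qed.

Lemma pfsum_weight_pos (z : C) : diam_disk a b (Some z) ->
  0 < Rsumn (fun i => d i / Cnorm2 (Csub z (RtoC (nth i s 0)))) n.
Proof.
  intros Hz. destruct Hleft as [j [Hj _]].
  assert (P : forall i, (i < n)%nat -> 0 < d i / Cnorm2 (Csub z (RtoC (nth i s 0)))).
  { intros i Hi. apply Rdiv_lt_0_compat; [auto|].
    pose proof (diam_disk_pole_dist z _ Hz (Hout i Hi)). Cunf. rewrite Rminus_0_r. lra. }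
  apply (Rsumn_pos _ _ j); auto. intros i Hi; left; auto.
Qed.

Definition pfsum_slope (z1 z2 : C) : C :=
  Csumn (fun i => Cmul (RtoC (d i))
    (Cinv (Cmul (Csub z1 (RtoC (nth i s 0))) (Csub z2 (RtoC (nth i s 0)))))) n.

Lemma pfsum_sub (z1 z2 : C) : diam_disk a b (Some z1) -> diam_disk a b (Some z2) ->
  Csub (pfsum d s n z1) (pfsum d s n z2) = Cmul (Csub z2 z1) (pfsum_slope z1 z2).
Proof.
  intros D1 D2. unfold pfsum, pfsum_slope. rewrite Csub_Csumn, Cmul_Csumn.
  apply Csumn_ext. intros i Hi.
  pose proof (diam_disk_pole_dist z1 _ D1 (Hout i Hi)).
  pose proof (diam_disk_pole_dist z2 _ D2 (Hout i Hi)).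
  rewrite Cinv_mul by (Cunf; lra). destruct z1, z2. Cunf. apply C_ext; simpl; field; lra.
Qed.

(* Two real points of the disk lie on the same side of every pole. *)
Lemma pfsum_slope_real (z1 z2 : C) : diam_disk a b (Some z1) -> diam_disk a b (Some z2) ->
  im z1 = 0 -> im z2 = 0 -> 0 < re (pfsum_slope z1 z2).
Proof.
  intros D1 D2 Y1 Y2. destruct Hleft as [j [Hj _]].
  pose proof (diam_disk_re z1 D1). pose proof (diam_disk_re z2 D2).
  unfold pfsum_slope. rewrite re_Csumn.
  assert (P : forall i, (i < n)%nat -> 0 < re (Cmul (RtoC (d i))
      (Cinv (Cmul (Csub z1 (RtoC (nth i s 0))) (Csub z2 (RtoC (nth i s 0))))))).
  { intros i Hi.
    assert (PP : 0 < (re z1 - nth i s 0) * (re z2 - nth i s 0)) by (destruct (Hout i Hi); nra).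
    destruct z1 as [X1 Y1'], z2 as [X2 Y2']; cbn [re im] in *; subst Y1' Y2'.
    assert (E : re (Cmul (RtoC (d i)) (Cinv (Cmul (Csub (mkC X1 0) (RtoC (nth i s 0)))
                  (Csub (mkC X2 0) (RtoC (nth i s 0)))))) = d i / ((X1 - nth i s 0) * (X2 - nth i s 0)))
      by (Cunf; field; split; intros E0; rewrite E0 in PP; lra).
    rewrite E. apply Rdiv_lt_0_compat; auto. }
  apply (Rsumn_pos _ _ j); auto. intros i Hi; left; auto.
Qed.

(* Multiplying by (z1 - b)(z2 - b) makes every term of the slope have imaginary part of
   sign opposite to Im z1, strictly so for the poles left of the disk. *)
Lemma pfsum_slope_nonreal (z1 z2 : C) : diam_disk a b (Some z1) -> diam_disk a b (Some z2) ->
  0 < im z1 * im z2 ->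
  im z1 * im (Cmul (Cmul (Csub z1 (RtoC b)) (Csub z2 (RtoC b))) (pfsum_slope z1 z2)) < 0.
Proof.
  intros D1 D2 HY. destruct Hleft as [j [Hj Hsj]].
  unfold pfsum_slope. rewrite Cmul_Csumn, im_Csumn, <- Rsumn_scal.
  set (W := Cmul (Csub z1 (RtoC b)) (Csub z2 (RtoC b))).
  set (f := fun i => im z1 * im (Cmul W (Cmul (RtoC (d i))
      (Cinv (Cmul (Csub z1 (RtoC (nth i s 0))) (Csub z2 (RtoC (nth i s 0)))))))).
  assert (Ef : forall i, f i = d i * (im z1 * im (Cmul W
      (Cinv (Cmul (Csub z1 (RtoC (nth i s 0))) (Csub z2 (RtoC (nth i s 0)))))))).
  { intros i. unfold f. Cunf. ring. }
  enough (0 < Rsumn (fun i => - f i) n) by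
    (rewrite (Rsumn_ext (fun i => - f i) (fun i => -1 * f i)), Rsumn_scal in H by (intros; ring);
     fold f; lra).
  apply (Rsumn_pos _ _ j); auto.
  - intros i Hi. rewrite Ef.
    destruct (cross_term_im_sign _ z1 z2 D1 D2 HY (Hout i Hi)) as [K _].
    pose proof (Hd i Hi). unfold W. nra.
  - rewrite Ef. destruct (cross_term_im_sign _ z1 z2 D1 D2 HY (Hout j Hj)) as [_ K].
    pose proof (Hd j Hj). specialize (K Hsj). unfold W. nra.
Qed.

Lemma pfsum_injective_on_diam_disk (z1 z2 : C) :
  diam_disk a b (Some z1) -> diam_disk a b (Some z2) ->
  pfsum d s n z1 = pfsum d s n z2 -> z1 = z2.
Proof.
  intros D1 D2 E.
  destruct (Req_dec (Cnorm2 (Csub z2 z1)) 0) as [N|N].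
  { apply Cnorm2_eq0 in N. apply C_ext; [apply (f_equal re) in N|apply (f_equal im) in N];
      Cunf; lra. }
  exfalso.
  assert (Hslope : pfsum_slope z1 z2 = RtoC 0).
  { apply (Cmul_cancel_l (Csub z2 z1)); auto. rewrite <- pfsum_sub, E by auto. Cring. }
  assert (Hsign : (im z1 = 0 /\ im z2 = 0) \/ 0 < im z1 * im z2).
  { pose proof (f_equal im E) as Ei. rewrite !im_pfsum in Ei.
    pose proof (pfsum_weight_pos z1 D1). pose proof (pfsum_weight_pos z2 D2).
    revert Ei H H0. generalize (Rsumn (fun i => d i / Cnorm2 (Csub z1 (RtoC (nth i s 0)))) n)
      (Rsumn (fun i => d i / Cnorm2 (Csub z2 (RtoC (nth i s 0)))) n).
    intros c1 c2 Ei H1 H2.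
    destruct (Req_dec (im z1) 0) as [Y|Y]; [left; split; [auto|]; rewrite Y in Ei; nra|right].
    assert (0 < im z1 * im z1) by (destruct (Rlt_or_le 0 (im z1)); nra).
    assert (im z1 * im z2 * c2 = im z1 * im z1 * c1) by (apply (f_equal (Rmult (im z1))) in Ei; lra).
    assert (0 < im z1 * im z2 * c2) by nra. nra. }
  destruct Hsign as [[Y1 Y2]|HY].
  - pose proof (pfsum_slope_real z1 z2 D1 D2 Y1 Y2). rewrite Hslope in H. simpl in H. lra.
  - pose proof (pfsum_slope_nonreal z1 z2 D1 D2 HY). rewrite Hslope in H. Cunf. lra.
Qed.

End DiamDisk.

(** * Signs of products of root factors *)

Definition ssorted (l : list R) (n : nat) : Prop :=
  forall i, (S i < n)%nat -> nth i l 0 < nth (S i) l 0.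

Lemma sorted_lt (l : list R) (n i j : nat) : ssorted l n -> (i < j)%nat -> (j < n)%nat ->
  nth i l 0 < nth j l 0.
Proof.
  intros H Hij Hj. induction j as [|j IH]; [lia|].
  destruct (Nat.eq_dec i j) as [->|Hne]; [apply H; lia|].
  apply Rlt_trans with (nth j l 0); [apply IH; lia|apply H; lia].
Qed.

Lemma sorted_le (l : list R) (n i j : nat) : ssorted l n -> (i <= j)%nat -> (j < n)%nat ->
  nth i l 0 <= nth j l 0.
Proof.
  intros H Hij Hj. destruct (Nat.eq_dec i j) as [->|Hne]; [lra|].
  left; apply (sorted_lt l n); auto; lia.
Qed.

Lemma sorted_NoDup (l : list R) (n : nat) : length l = n -> ssorted l n -> NoDup l.
Proof.
  intros Hl H. apply (NoDup_nth l 0). intros i j Hi Hj E.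
  destruct (Nat.lt_total i j) as [Hlt|[Heq|Hgt]]; auto.
  - pose proof (sorted_lt l n i j H Hlt ltac:(lia)); lra.
  - pose proof (sorted_lt l n j i H Hgt ltac:(lia)); lra.
Qed.

Lemma rprod_same_side (u v : R) (l : list R) :
  (forall y, In y l -> (y < u /\ y < v) \/ (u < y /\ v < y)) -> 0 < rprod u l * rprod v l.
Proof.
  induction l as [|y l IH]; intros H; simpl; [lra|].
  assert (0 < (u - y) * (v - y)) by (destruct (H y (or_introl eq_refl)); nra).
  assert (0 < rprod u l * rprod v l) by (apply IH; intros; apply H; right; auto).
  replace ((u - y) * rprod u l * ((v - y) * rprod v l))
    with ((u - y) * (v - y) * (rprod u l * rprod v l)) by ring.
  nra.
Qed.

Lemma rprod_sign_change (xs : list R) (n m : nat) (u v : R) :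
  length xs = n -> ssorted xs n -> (m < n)%nat ->
  (forall l, (l < m)%nat -> nth l xs 0 < u) -> (forall l, (m < l < n)%nat -> v < nth l xs 0) ->
  u < nth m xs 0 < v -> rprod u xs * rprod v xs < 0.
Proof.
  intros Hl Hs Hm Hlo Hhi Huv.
  rewrite (rm_decomp m xs) by lia. rewrite !rprod_app. cbn [rprod].
  assert (A : 0 < rprod u (firstn m xs) * rprod v (firstn m xs)).
  { apply rprod_same_side. intros y Hy. destruct (In_nth _ y 0 Hy) as [l [Hl' <-]].
    rewrite length_firstn in Hl'. rewrite nth_firstn.
    replace (l <? m)%nat with true by (symmetry; apply Nat.ltb_lt; lia).
    pose proof (Hlo l ltac:(lia)). left; lra. }
  assert (B : 0 < rprod u (skipn (S m) xs) * rprod v (skipn (S m) xs)).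
  { apply rprod_same_side. intros y Hy. destruct (In_nth _ y 0 Hy) as [l [Hl' <-]].
    rewrite length_skipn in Hl'. rewrite nth_skipn.
    pose proof (Hhi (S m + l)%nat ltac:(lia)). right; lra. }
  assert ((u - nth m xs 0) * (v - nth m xs 0) < 0) by nra.
  set (P1 := rprod u (firstn m xs) * rprod v (firstn m xs)) in A.
  set (P2 := rprod u (skipn (S m) xs) * rprod v (skipn (S m) xs)) in B.
  replace (rprod u (firstn m xs) * ((u - nth m xs 0) * rprod u (skipn (S m) xs)) *
           (rprod v (firstn m xs) * ((v - nth m xs 0) * rprod v (skipn (S m) xs))))
    with (P1 * P2 * ((u - nth m xs 0) * (v - nth m xs 0))) by (unfold P1, P2; ring).
  apply Rmult_pos_neg; [apply Rmult_lt_0_compat|]; assumption.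
Qed.

Lemma rprod_sign_change_interlaced (xs ys : list R) (k i : nat) :
  length ys = (k - 1)%nat -> ssorted xs k ->
  (forall l, (S l < k)%nat -> nth l xs 0 < nth l ys 0 < nth (S l) xs 0) ->
  (S i < k)%nat -> rprod (nth i xs 0) ys * rprod (nth (S i) xs 0) ys < 0.
Proof.
  intros Hl Hxs Hint Hi.
  assert (Hys : ssorted ys (k - 1))
    by (intros l Hl'; pose proof (Hint l ltac:(lia)); pose proof (Hint (S l) ltac:(lia)); lra).
  apply (rprod_sign_change ys (k - 1) i); auto; try lia.
  - intros l Hl'. pose proof (Hint l ltac:(lia)).
    pose proof (sorted_le xs k (S l) i Hxs ltac:(lia) ltac:(lia)). lra.
  - intros l Hl'. pose proof (Hint l ltac:(lia)).
    pose proof (sorted_le xs k (S i) l Hxs ltac:(lia) ltac:(lia)). lra.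
Qed.

Definition interleaved (a b : list R) (n : nat) : Prop :=
  (forall i, (i < n)%nat -> nth i a 0 < nth i b 0) /\
  (forall i, (S i < n)%nat -> nth i b 0 < nth (S i) a 0).

Lemma interleaved_sorted (a b : list R) (n : nat) : interleaved a b n -> ssorted a n /\ ssorted b n.
Proof.
  intros [H1 H2]. split; intros i Hi.
  - pose proof (H1 i ltac:(lia)); pose proof (H2 i Hi); lra.
  - pose proof (H2 i Hi); pose proof (H1 (S i) Hi); lra.
Qed.

Lemma rprod_sign_change_interleaved (s xs : list R) (k i : nat) :
  length xs = k -> interleaved s xs k \/ interleaved xs s k -> (S i < k)%nat ->
  rprod (nth i s 0) xs * rprod (nth (S i) s 0) xs < 0.
Proof.
  intros Hl Hint Hi.
  destruct Hint as [Hint|Hint]; pose proof (interleaved_sorted _ _ _ Hint) as [Ha Hb];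
    destruct Hint as [H1 H2].
  - apply (rprod_sign_change xs k i); auto; try lia.
    + intros l Hl'. destruct i as [|i]; [lia|].
      pose proof (sorted_le xs k l i Hb ltac:(lia) ltac:(lia)). pose proof (H2 i ltac:(lia)). lra.
    + intros l Hl'. pose proof (H1 (S i) Hi).
      pose proof (sorted_le xs k (S i) l Hb ltac:(lia) ltac:(lia)). lra.
    + pose proof (H1 i ltac:(lia)); pose proof (H2 i Hi); lra.
  - apply (rprod_sign_change xs k (S i)); auto; try lia.
    + intros l Hl'. pose proof (H1 i ltac:(lia)).
      pose proof (sorted_le xs k l i Ha ltac:(lia) ltac:(lia)). lra.
    + intros l Hl'. destruct (Nat.eq_dec l (S (S i))) as [->|Hne]; [apply H2; lia|].
      pose proof (H2 (S i) ltac:(lia)).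
      pose proof (sorted_le xs k (S (S i)) l Ha ltac:(lia) ltac:(lia)). lra.
Qed.

(** * Roots of the pencil p + alpha q *)

Lemma continuity_peval (l : rpoly) : continuity (peval l).
Proof.
  induction l as [|a l IH]; simpl.
  - apply continuity_const. intros x y; reflexivity.
  - apply (continuity_plus (fun _ => a) (fun x => x * peval l x)).
    + apply continuity_const. intros x y; reflexivity.
    + apply (continuity_mult (fun x => x) (peval l)); auto.
      apply derivable_continuous, derivable_id.
Qed.

Lemma IVT_strict (f : R -> R) (u v : R) : continuity f -> u < v -> f u * f v < 0 ->
  exists x, u < x < v /\ f x = 0.
Proof.
  intros Hc Huv Hs.
  assert (Hgen : forall g, continuity g -> g u < 0 -> 0 < g v -> exists x, u < x < v /\ g x = 0).
  { intros g Hg Hu Hv. destruct (IVT g u v Hg Huv Hu Hv) as [x [[H1 H2] H3]].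
    exists x; split; [split|exact H3].
    - destruct H1 as [H1|<-]; [exact H1|lra].
    - destruct H2 as [H2| ->]; [exact H2|lra]. }
  destruct (Rlt_or_le (f u) 0) as [Hu|Hu].
  - apply Hgen; auto. nra.
  - assert (0 < f u) by (destruct Hu as [Hu|Hu]; [exact Hu|rewrite <- Hu in Hs; lra]).
    destruct (Hgen (fun x => - f x)) as [x [Hx E]];
      [apply continuity_opp; auto|cbv beta; lra|cbv beta; nra|].
    exists x; split; [exact Hx|lra].
Qed.

Lemma choice_list (n : nat) (Q : nat -> R -> Prop) :
  (forall i, (i < n)%nat -> exists x, Q i x) ->
  exists l, length l = n /\ forall i, (i < n)%nat -> Q i (nth i l 0).
Proof.
  induction n as [|n IH]; intros H.
  - exists nil; split; [reflexivity|intros; lia].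
  - destruct IH as [l [Hl HQ]]; [intros; apply H; lia|].
    destruct (H n (Nat.lt_succ_diag_r n)) as [x Hx].
    exists (l ++ [x]); split; [rewrite length_app, Hl, Nat.add_comm; reflexivity|].
    intros i Hi. destruct (Nat.eq_dec i n) as [->|Hne].
    + replace (nth n (l ++ [x]) 0) with x by (rewrite <- Hl; symmetry; apply nth_middle).
      exact Hx.
    + rewrite app_nth1 by lia. apply HQ; lia.
Qed.

Lemma peval_factor_last_root (n : nat) (P : rpoly) (rs : list R) :
  length P = S (S n) -> lead P <> 0 -> length rs = n -> NoDup rs ->
  (forall r, In r rs -> peval P r = 0) ->
  exists r, forall x, peval P x = lead P * ((x - r) * rprod x rs).
Proof.
  intros HP HL Hrs Hnd Hr.
  destruct (pevalC_divide_roots n 1 P rs) as [g [Hg1 [Hg2 Hg3]]]; auto.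
  { rewrite HP; f_equal; lia. }
  destruct g as [|g0 [|g1 [|]]]; try discriminate.
  assert (Eg1 : g1 = lead P) by (rewrite <- Hg2; reflexivity).
  exists (- g0 / g1). intros x.
  pose proof (f_equal re (Hg3 (RtoC x))) as E.
  rewrite !pevalC_RtoC, cprod_RtoC in E. Cunf. rewrite E, <- Eg1.
  field. rewrite Eg1; exact HL.
Qed.

Definition alternates (f : R -> R) (l : list R) (n : nat) : Prop :=
  forall i, (S i < n)%nat -> f (nth i l 0) * f (nth (S i) l 0) < 0.

(* If [r] lay in some [[xs_l, xs_(l+1)]], [f] would have two roots there and not change sign. *)
Lemma extra_root_outside (f : R -> R) (c r : R) (xs s' : list R) (k : nat) :
  (2 <= k)%nat -> ssorted xs k -> alternates f xs k -> length s' = (k - 1)%nat ->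
  (forall l, (S l < k)%nat -> nth l xs 0 < nth l s' 0 < nth (S l) xs 0) ->
  (forall x, f x = c * ((x - r) * rprod x s')) ->
  r < nth 0 xs 0 \/ nth (k - 1) xs 0 < r.
Proof.
  intros Hk Sxs Halt Hs' Hint Hf.
  destruct (Rlt_or_le r (nth 0 xs 0)) as [Hr|Hr]; [left; exact Hr|right].
  assert (Step : forall l, (S l < k)%nat -> nth l xs 0 <= r -> nth (S l) xs 0 < r).
  { intros l Hl H0. apply Rnot_le_lt. intros H1.
    pose proof (Halt l Hl) as A. rewrite !Hf in A.
    pose proof (rprod_sign_change_interlaced xs s' k l Hs' Sxs Hint Hl) as B.
    set (w := (nth l xs 0 - r) * (nth (S l) xs 0 - r)).
    set (uv := rprod (nth l xs 0) s' * rprod (nth (S l) xs 0) s') in B.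
    assert (Hw : c * c * w <= 0).
    { assert (w <= 0) by (unfold w; nra).
      assert (0 <= c * c) by nra. clearbody w. nra. }
    replace (c * ((nth l xs 0 - r) * rprod (nth l xs 0) s') *
             (c * ((nth (S l) xs 0 - r) * rprod (nth (S l) xs 0) s')))
      with ((c * c * w) * uv) in A by (unfold w, uv; ring).
    nra. }
  assert (Hall : forall l, (S l < k)%nat -> nth (S l) xs 0 < r).
  { induction l as [|l IH]; intros Hl; apply Step; try lia; [exact Hr|].
    left; apply IH; lia. }
  replace (k - 1)%nat with (S (k - 2)) by lia. apply Hall; lia.
Qed.

Lemma roots_between_sign_changes (f : R -> R) (xs : list R) (k : nat) :
  continuity f -> ssorted xs k -> alternates f xs k ->
  exists s', length s' = (k - 1)%nat /\
    forall l, (S l < k)%nat -> nth l xs 0 < nth l s' 0 < nth (S l) xs 0 /\ f (nth l s' 0) = 0.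
Proof.
  intros Hc Sxs Halt.
  destruct (choice_list (k - 1) (fun l x => nth l xs 0 < x < nth (S l) xs 0 /\ f x = 0))
    as [s' [Hs' Hf]].
  { intros l Hl.
    destruct (IVT_strict f (nth l xs 0) (nth (S l) xs 0)) as [x Hx];
      [exact Hc|apply Sxs; lia|apply Halt; lia|exists x; exact Hx]. }
  exists s'; split; [exact Hs'|]. intros l Hl; apply Hf; lia.
Qed.

Lemma alternating_poly_roots (P : rpoly) (xs : list R) (k : nat) :
  (2 <= k)%nat -> length P = S k -> lead P <> 0 -> ssorted xs k -> alternates (peval P) xs k ->
  exists s, sorted_roots (peval P) k s /\ (interleaved s xs k \/ interleaved xs s k).
Proof.
  intros Hk HP HL Sxs Halt.
  destruct (roots_between_sign_changes (peval P) xs k (continuity_peval P) Sxs Halt)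
    as [s' [Hs' Hf]].
  assert (Hint : forall l, (S l < k)%nat -> nth l xs 0 < nth l s' 0 < nth (S l) xs 0)
    by (intros l Hl; apply Hf; exact Hl).
  assert (Hnd : NoDup s').
  { apply (sorted_NoDup s' (k - 1) Hs'). intros l Hl.
    pose proof (Hint l ltac:(lia)); pose proof (Hint (S l) ltac:(lia)); lra. }
  assert (Hroots : forall x, In x s' -> peval P x = 0).
  { intros x Hx. destruct (In_nth s' x 0 Hx) as [l [Hl <-]]. apply Hf; lia. }
  destruct (peval_factor_last_root (k - 1) P s') as [r Hr]; auto.
  { rewrite HP; f_equal; lia. }
  assert (Pr : peval P r = 0) by (rewrite Hr; ring).
  destruct (extra_root_outside (peval P) (lead P) r xs s' k Hk Sxs Halt Hs' Hint Hr) as [Hlt|Hgt].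
  - exists (r :: s').
    assert (I : interleaved (r :: s') xs k).
    { split; [intros [|i] Hi; [exact Hlt|]|intros i Hi]; apply Hint; lia. }
    split; [|left; exact I].
    split; [simpl; lia|split; [apply (interleaved_sorted _ _ _ I)|]].
    intros [|i] Hi; [exact Pr|apply Hf; lia].
  - exists (s' ++ [r]).
    assert (Nl : forall i, (i < k - 1)%nat -> nth i (s' ++ [r]) 0 = nth i s' 0)
      by (intros; apply app_nth1; lia).
    assert (Nr : nth (k - 1) (s' ++ [r]) 0 = r) by (rewrite <- Hs'; apply nth_middle).
    assert (I : interleaved xs (s' ++ [r]) k).
    { split; intros i Hi.
      - destruct (Nat.eq_dec i (k - 1)) as [->|Hne]; [rewrite Nr; exact Hgt|].
        rewrite Nl by lia. apply Hint; lia.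
      - rewrite Nl by lia. apply Hint; lia. }
    split; [|right; exact I].
    split; [rewrite length_app; simpl; lia|split; [apply (interleaved_sorted _ _ _ I)|]].
    intros i Hi. destruct (Nat.eq_dec i (k - 1)) as [->|Hne]; [rewrite Nr; exact Pr|].
    rewrite Nl by lia. apply Hf; lia.
Qed.

Lemma sorted_index_lt (l : list R) (n i j : nat) : ssorted l n -> (i < n)%nat -> (j < n)%nat ->
  nth i l 0 < nth j l 0 -> (i < j)%nat.
Proof.
  intros H Hi Hj Hlt. destruct (Nat.lt_ge_cases i j) as [|Hge]; auto.
  pose proof (sorted_le l n j i H Hge Hi). lra.
Qed.

Lemma sorted_same_elements (a b : list R) (n : nat) :
  length a = n -> length b = n -> ssorted a n -> ssorted b n ->
  (forall x, In x a <-> In x b) -> a = b.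
Proof.
  intros Ha Hb Sa Sb Hab.
  assert (Key : forall l1 l2 i, length l1 = n -> length l2 = n -> ssorted l1 n -> ssorted l2 n ->
      (forall x, In x l1 -> In x l2) -> (i < n)%nat ->
      (forall j, (j < i)%nat -> nth j l1 0 = nth j l2 0) -> ~ nth i l1 0 < nth i l2 0).
  { intros l1 l2 i H1 H2 S1 S2 H12 Hi IH Hlt.
    destruct (In_nth l2 (nth i l1 0) 0 (H12 _ (nth_In l1 0 (ltac:(lia) : (i < length l1)%nat)))) as [m [Hm Em]].
    assert (Hmi : (m < i)%nat) by (apply (sorted_index_lt l2 n); try lia; auto; rewrite Em; auto).
    rewrite <- IH in Em by exact Hmi.
    pose proof (sorted_lt l1 n m i S1 Hmi Hi). lra. }
  apply (nth_ext a b 0 0); [lia|]. intros i Hi. rewrite Ha in Hi.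
  induction i as [i IH] using lt_wf_ind.
  assert (IH' : forall j, (j < i)%nat -> nth j a 0 = nth j b 0) by (intros; apply IH; lia).
  destruct (Rtotal_order (nth i a 0) (nth i b 0)) as [Hlt|[Heq|Hgt]]; auto.
  - exfalso. apply (Key a b i); auto. intros x; apply Hab.
  - exfalso. apply (Key b a i); auto; [intros x; apply Hab|].
    intros j Hj; symmetry; auto.
Qed.

Lemma sorted_roots_unique (P : rpoly) (k : nat) (s rs : list R) :
  length P = S k -> lead P <> 0 -> sorted_roots (peval P) k s -> sorted_roots (peval P) k rs ->
  s = rs.
Proof.
  intros HP HL Hs Hrs.
  assert (Hall : forall l, sorted_roots (peval P) k l -> forall x, In x l <-> peval P x = 0).
  { intros l [Hl [Sl Rl]] x.
    assert (Hroots : forall r, In r l -> peval P r = 0).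
    { intros r Hr. destruct (In_nth l r 0 Hr) as [i [Hi <-]]. apply Rl; lia. }
    destruct (peval_factor k P l HP Hl (sorted_NoDup l k Hl Sl) Hroots) as [_ HF].
    split; [apply Hroots|]. intros Hx. rewrite HF in Hx.
    apply Rmult_integral in Hx as [Hx|Hx]; [apply rprod_eq0; exact Hx|contradiction]. }
  apply (sorted_same_elements s rs k);
    [apply Hs|apply Hrs|exact (proj1 (proj2 Hs))|exact (proj1 (proj2 Hrs))|].
  intros x. rewrite (Hall s Hs), (Hall rs Hrs). reflexivity.
Qed.

Definition pencil (p q : rpoly) (alpha : R) : rpoly := padd p (pscale alpha q).

Lemma peval_pencil (p q : rpoly) (alpha x : R) :
  peval (pencil p q alpha) x = peval p x + alpha * peval q x.
Proof. unfold pencil. rewrite peval_padd, peval_pscale. reflexivity. Qed.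

Lemma pevalC_pencil (p q : rpoly) (alpha : R) (z : C) :
  pevalC (pencil p q alpha) z = Cadd (pevalC p z) (Cmul (RtoC alpha) (pevalC q z)).
Proof. unfold pencil. rewrite pevalC_padd, pevalC_pscale. reflexivity. Qed.

Lemma pencil_degree (p q : rpoly) (alpha : R) (k : nat) :
  has_degree p k -> (length q < length p)%nat -> has_degree (pencil p q alpha) k.
Proof.
  intros [Hp HL] Hq. unfold pencil. split.
  - rewrite length_padd, length_pscale, Nat.max_l; lia.
  - rewrite lead_padd; [exact HL|rewrite length_pscale; exact Hq].
Qed.

Section Interlacing.

Variables (p q : rpoly) (k : nat) (xs ys : list R).
Hypotheses (Hk : (2 <= k)%nat) (Hp : has_degree p k) (Hq : has_degree q (k - 1))
  (Hxs : sorted_roots (peval p) k xs) (Hys : sorted_roots (peval q) (k - 1) ys)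
  (Hint : forall i, (S i < k)%nat ->
     nth i xs 0 < nth i ys 0 /\ nth i ys 0 < nth (S i) xs 0).

Lemma peval_factor_interlacing : forall x, peval p x = rprod x xs * lead p.
Proof.
  destruct Hp as [HP _], Hxs as [Lx [Sx Rx]].
  apply (peval_factor k p xs HP Lx (sorted_NoDup xs k Lx Sx)).
  intros r Hr. destruct (In_nth xs r 0 Hr) as [i [Hi <-]]. apply Rx; lia.
Qed.

Lemma interlacing_alternates : alternates (peval q) xs k.
Proof.
  intros i Hi. destruct Hq as [HQ HL], Hxs as [_ [Sx _]], Hys as [Ly [Sy Ry]].
  assert (Hroots : forall r, In r ys -> peval q r = 0).
  { intros r Hr. destruct (In_nth ys r 0 Hr) as [l [Hl <-]]. apply Ry; lia. }
  destruct (peval_factor (k - 1) q ys HQ Ly (sorted_NoDup ys (k - 1) Ly Sy) Hroots) as [_ HF].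
  rewrite !HF.
  pose proof (rprod_sign_change_interlaced xs ys k i Ly Sx Hint Hi).
  assert (0 < lead q * lead q) by nra.
  replace (rprod (nth i xs 0) ys * lead q * (rprod (nth (S i) xs 0) ys * lead q))
    with (rprod (nth i xs 0) ys * rprod (nth (S i) xs 0) ys * (lead q * lead q)) by ring.
  apply Rmult_neg_pos; assumption.
Qed.

Lemma interlacing_coprime (t : R) : peval p t = 0 -> peval q t <> 0.
Proof.
  intros Ht Hqt. rewrite peval_factor_interlacing in Ht.
  apply Rmult_integral in Ht as [Ht|Ht]; [|exact (proj2 Hp Ht)].
  apply rprod_eq0 in Ht. destruct (In_nth xs t 0 Ht) as [i [Hi <-]].
  destruct Hxs as [Lx _]. rewrite Lx in Hi.
  destruct (Nat.lt_ge_cases (S i) k) as [H|H].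
  - pose proof (interlacing_alternates i H) as A. rewrite Hqt in A. lra.
  - pose proof (interlacing_alternates (i - 1)%nat ltac:(lia)) as A.
    replace (S (i - 1)) with i in A by lia. rewrite Hqt in A. lra.
Qed.

Lemma pencil_roots_alternate (alpha : R) :
  exists s, sorted_roots (peval (pencil p q alpha)) k s /\ alternates (peval q) s k.
Proof.
  pose proof Hxs as [Lx [Sx Rx]].
  destruct (Req_dec alpha 0) as [->|Ha].
  { exists xs. split; [|exact interlacing_alternates].
    repeat split; auto. intros i Hi. rewrite peval_pencil, Rx by exact Hi. ring. }
  assert (HPx : forall i, (i < k)%nat -> peval (pencil p q alpha) (nth i xs 0) = alpha * peval q (nth i xs 0))
    by (intros i Hi; rewrite peval_pencil, Rx by exact Hi; ring).
  assert (HP : has_degree (pencil p q alpha) k)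
    by (apply pencil_degree; [exact Hp|destruct Hp, Hq; lia]).
  destruct (alternating_poly_roots (pencil p q alpha) xs k) as [s [Hs Hsx]]; auto; try apply HP.
  { intros i Hi. rewrite !HPx by lia. pose proof (interlacing_alternates i Hi).
    replace (alpha * peval q (nth i xs 0) * (alpha * peval q (nth (S i) xs 0)))
      with (alpha * alpha * (peval q (nth i xs 0) * peval q (nth (S i) xs 0))) by ring.
    apply Rmult_pos_neg; [nra|assumption]. }
  exists s; split; [exact Hs|]. intros i Hi.
  destruct Hs as [_ [_ Rs]].
  assert (Hqs : forall j, (j < k)%nat -> peval q (nth j s 0) = - peval p (nth j s 0) / alpha).
  { intros j Hj. pose proof (Rs j Hj) as E. rewrite peval_pencil in E. field_simplify_eq; lra. }
  rewrite !Hqs, !peval_factor_interlacing by lia.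
  pose proof (rprod_sign_change_interleaved s xs k i Lx Hsx Hi).
  replace (- (rprod (nth i s 0) xs * lead p) / alpha * (- (rprod (nth (S i) s 0) xs * lead p) / alpha))
    with (rprod (nth i s 0) xs * rprod (nth (S i) s 0) xs * (lead p * lead p / (alpha * alpha)))
    by (field; exact Ha).
  apply Rmult_neg_pos; [assumption|].
  destruct Hp as [_ HL]. apply Rdiv_lt_0_compat; nra.
Qed.

End Interlacing.

(** * Real disks containing a disk on a diameter *)

Lemma diam_disk_real_point (a b x : R) : a < x < b -> diam_disk a b (Some (RtoC x)).
Proof. intros H. apply diam_disk_iff. simpl. nra. Qed.

Lemma diam_disk_is_real_disk (a b : R) : a < b -> is_real_disk (diam_disk a b).
Proof.
  intros Hab. split.
  - left. exists (RtoC ((a + b) / 2)), ((b - a) / 2). split; [lra|]. reflexivity.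
  - intros [[X Y]|]; [|reflexivity].
    change (CP1conj (Some (mkC X Y))) with (Some (mkC X (- Y))). rewrite !diam_disk_iff. simpl.
    replace (- Y * - Y) with (Y * Y) by ring. reflexivity.
Qed.

Definition reaches_beyond (U : CP1 -> Prop) (a b : R) : Prop :=
  exists e t, (e = a \/ e = b) /\ U (Some (RtoC e)) /\ U (Some (RtoC t)) /\ (t < a \/ b < t).

Section RealDiskContainingDiamDisk.

Variables (a b : R) (U : CP1 -> Prop).
Hypotheses (Hab : a < b) (Hconj : forall x, U x <-> U (CP1conj x))
  (Hsub : forall x, diam_disk a b x -> U x).

Let Hseg (x : R) : a < x < b -> U (Some (RtoC x)).
Proof. intros H. apply Hsub, diam_disk_real_point, H. Qed.

Lemma open_disk_reaches_beyond (c : C) (r : R) : 0 < r ->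
  (forall x, U x <-> open_disk c r x) -> (exists x, U x /\ ~ diam_disk a b x) ->
  reaches_beyond U a b.
Proof.
  intros Hr HS [x0 [Sx0 Dx0]]. destruct c as [c1 c2].
  assert (Hc2 : c2 = 0).
  { destruct (Req_dec c2 0) as [|Hne]; auto. exfalso.
    destruct (Rle_or_lt r (Rabs c2)) as [Hle|Hlt].
    - assert (S1 : U (Some (mkC c1 c2))) by (apply HS; simpl; Cunf; nra).
      apply Hconj, HS in S1. simpl in S1. Cunf.
      unfold Rabs in Hle; destruct (Rcase_abs c2); nra.
    - unfold Rabs in Hlt; destruct (Rcase_abs c2) as [Hn|Hp].
      + assert (S1 : U (Some (mkC c1 (- r)))) by (apply HS; simpl; Cunf; nra).
        apply Hconj, HS in S1. simpl in S1. Cunf. nra.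
      + assert (S1 : U (Some (mkC c1 r))) by (apply HS; simpl; Cunf; nra).
        apply Hconj, HS in S1. simpl in S1. Cunf. nra. }
  subst c2.
  assert (Sr : forall x, U (Some (RtoC x)) <-> (x - c1) * (x - c1) < r * r).
  { intros x. rewrite HS. simpl. Cunf. split; intros; nra. }
  assert (Dm := Hseg ((a + b) / 2) ltac:(lra)). apply Sr in Dm.
  assert (L1 : c1 - r <= a).
  { apply Rnot_lt_le. intros H. destruct (Rlt_or_le (c1 - r) b) as [H2|H2]; [|nra].
    pose proof (proj1 (Sr _) (Hseg ((a + (c1 - r)) / 2) ltac:(lra))). nra. }
  assert (L2 : b <= c1 + r).
  { apply Rnot_lt_le. intros H. destruct (Rlt_or_le a (c1 + r)) as [H2|H2]; [|nra].
    pose proof (proj1 (Sr _) (Hseg ((b + (c1 + r)) / 2) ltac:(lra))). nra. }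
  destruct (Rlt_or_le (c1 - r) a) as [H1|H1]; [|destruct (Rlt_or_le b (c1 + r)) as [H2|H2]].
  - exists a, ((a + (c1 - r)) / 2). repeat split; [left; reflexivity|apply Sr; nra|apply Sr; nra|left; lra].
  - exists b, ((b + (c1 + r)) / 2). repeat split; [right; reflexivity|apply Sr; nra|apply Sr; nra|right; lra].
  - exfalso. apply Dx0. apply HS in Sx0.
    replace c1 with ((a + b) / 2) in Sx0 by lra. replace r with ((b - a) / 2) in Sx0 by lra.
    exact Sx0.
Qed.

Lemma halfplane_reaches_beyond (a1 a2 t0 : R) : a1 <> 0 \/ a2 <> 0 ->
  (forall x, U x <-> open_halfplane a1 a2 t0 x) -> reaches_beyond U a b.
Proof.
  intros Ha HS.
  assert (Ha2 : a2 = 0).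
  { destruct (Req_dec a2 0) as [|Hne]; auto. exfalso.
    set (y := (Rabs t0 + 1) / a2).
    assert (S1 : U (Some (mkC 0 y))).
    { apply HS. simpl. unfold y. field_simplify (a1 * 0 + a2 * ((Rabs t0 + 1) / a2)); [|exact Hne].
      pose proof (Rle_abs t0). lra. }
    apply Hconj, HS in S1. simpl in S1. unfold y in S1.
    field_simplify (a1 * 0 + a2 * - ((Rabs t0 + 1) / a2)) in S1; [|exact Hne].
    pose proof (Rle_abs (- t0)). rewrite Rabs_Ropp in H. lra. }
  subst a2. destruct Ha as [Ha|Ha]; [|lra].
  assert (Sr : forall x, U (Some (RtoC x)) <-> a1 * x > t0).
  { intros x. rewrite HS. simpl. split; intros; lra. }
  assert (Dm := proj1 (Sr _) (Hseg ((a + b) / 2) ltac:(lra))).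
  destruct (Rlt_or_le 0 a1) as [P|P].
  - exists b, (b + 1). repeat split; [right; reflexivity|apply Sr; nra|apply Sr; nra|right; lra].
  - exists a, (a - 1). repeat split; [left; reflexivity|apply Sr; nra|apply Sr; nra|left; lra].
Qed.

Lemma outer_disk_reaches_beyond (c : C) (r : R) : 0 < r ->
  (forall x, U x <-> outer_disk c r x) -> reaches_beyond U a b.
Proof.
  intros Hr HS. destruct c as [c1 c2].
  assert (Hc2 : c2 = 0).
  { destruct (Req_dec c2 0) as [|Hne]; auto. exfalso.
    destruct (Rlt_or_le 0 c2) as [P|P].
    - assert (S1 : U (Some (mkC c1 (- c2 - r)))) by (apply HS; simpl; Cunf; nra).
      apply Hconj, HS in S1. simpl in S1. Cunf. nra.
    - assert (S1 : U (Some (mkC c1 (- c2 + r)))) by (apply HS; simpl; Cunf; nra).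
      apply Hconj, HS in S1. simpl in S1. Cunf. nra. }
  subst c2.
  assert (Sr : forall x, U (Some (RtoC x)) <-> (x - c1) * (x - c1) > r * r).
  { intros x. rewrite HS. simpl. Cunf. split; intros; nra. }
  assert (Dm := proj1 (Sr _) (Hseg ((a + b) / 2) ltac:(lra))).
  (* [(a, b)] lies in the component of the real trace containing its midpoint. *)
  destruct (Rlt_or_le c1 ((a + b) / 2)) as [P|P].
  - assert (L : c1 + r <= a).
    { apply Rnot_lt_le. intros H.
      destruct (Rle_or_lt ((a + c1 + r) / 2) c1) as [H2|H2].
      - pose proof (proj1 (Sr _) (Hseg c1 ltac:(nra))). nra.
      - pose proof (proj1 (Sr _) (Hseg ((a + c1 + r) / 2) ltac:(nra))). nra. }
    exists b, (b + 1). repeat split; [right; reflexivity|apply Sr; nra|apply Sr; nra|right; lra].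
  - assert (L : b <= c1 - r).
    { apply Rnot_lt_le. intros H.
      destruct (Rle_or_lt c1 ((b + c1 - r) / 2)) as [H2|H2].
      - pose proof (proj1 (Sr _) (Hseg c1 ltac:(nra))). nra.
      - pose proof (proj1 (Sr _) (Hseg ((b + c1 - r) / 2) ltac:(nra))). nra. }
    exists a, (a - 1). repeat split; [left; reflexivity|apply Sr; nra|apply Sr; nra|left; lra].
Qed.

End RealDiskContainingDiamDisk.

Lemma real_disk_reaches_beyond (a b : R) (U : CP1 -> Prop) : a < b -> is_real_disk U ->
  (forall x, diam_disk a b x -> U x) -> (exists x, U x /\ ~ diam_disk a b x) ->
  reaches_beyond U a b.
Proof.
  intros Hab [HS Hconj] Hsub Hx.
  destruct HS as [[c [r [Hr HS]]]|[[a1 [a2 [t [Ha HS]]]]|[c [r [Hr HS]]]]].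
  - exact (open_disk_reaches_beyond a b U Hab Hconj Hsub c r Hr HS Hx).
  - exact (halfplane_reaches_beyond a b U Hab Hconj Hsub a1 a2 t Ha HS).
  - exact (outer_disk_reaches_beyond a b U Hab Hconj Hsub c r Hr HS).
Qed.

(** * Univalence and maximality *)

(* [rprod s_i (rm i s)] is [P'(s_i) / lead P] for [P] with simple roots [s]. *)
Lemma rprod_rm_alternates (s : list R) (k i : nat) : length s = k -> ssorted s k -> (S i < k)%nat ->
  rprod (nth i s 0) (rm i s) * rprod (nth (S i) s 0) (rm (S i) s) < 0.
Proof.
  intros Hl Hs Hi.
  pose proof (rm_decomp i s ltac:(lia)) as E.
  remember (skipn (S i) s) as t eqn:Et. destruct t as [|b l2].
  { apply (f_equal (@length R)) in Et. rewrite length_skipn in Et. simpl in Et. lia. }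
  set (l1 := firstn i s) in E. set (a := nth i s 0) in E |- *.
  assert (Hl1 : length l1 = i) by (unfold l1; rewrite length_firstn; lia).
  assert (Eb : nth (S i) s 0 = b).
  { rewrite E at 1. rewrite app_nth2 by lia. rewrite Hl1, Nat.sub_succ_l, Nat.sub_diag by lia.
    reflexivity. }
  rewrite Eb.
  assert (R1 : rm i s = l1 ++ b :: l2) by (rewrite E at 1; rewrite <- Hl1; apply rm_app).
  assert (R2 : rm (S i) s = l1 ++ a :: l2).
  { rewrite E. replace (l1 ++ a :: b :: l2) with ((l1 ++ [a]) ++ b :: l2) by (rewrite <- app_assoc; reflexivity).
    replace (S i) with (length (l1 ++ [a])) by (rewrite length_app; simpl; lia).
    rewrite rm_app, <- app_assoc. reflexivity. }
  rewrite R1, R2, !rprod_app. cbn [rprod].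
  assert (Hab : a < b) by (rewrite <- Eb; apply Hs; exact Hi).
  assert (A : 0 < rprod a l1 * rprod b l1).
  { apply rprod_same_side. intros y Hy. destruct (In_nth l1 y 0 Hy) as [m [Hm <-]].
    assert (nth m l1 0 = nth m s 0) by (rewrite E at 1; rewrite app_nth1; auto).
    pose proof (sorted_lt s k m i Hs ltac:(lia) ltac:(lia)) as Hlt. fold a in Hlt. left; lra. }
  assert (B : 0 < rprod a l2 * rprod b l2).
  { apply rprod_same_side. intros y Hy. destruct (In_nth l2 y 0 Hy) as [m [Hm <-]].
    assert (nth m l2 0 = nth (S (S m) + i) s 0).
    { rewrite E at 1. rewrite app_nth2 by lia. rewrite Hl1.
      replace (S (S m) + i - i)%nat with (S (S m)) by lia. reflexivity. }
    assert (Hlen : length s = (i + S (S (length l2)))%nat)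
      by (rewrite E, length_app; simpl; lia).
    pose proof (sorted_lt s k (S i) (S (S m) + i) Hs ltac:(lia) ltac:(lia)). right; lra. }
  set (P1 := rprod a l1 * rprod b l1) in A. set (P2 := rprod a l2 * rprod b l2) in B.
  replace (rprod a l1 * ((a - b) * rprod a l2) * (rprod b l1 * ((b - a) * rprod b l2)))
    with (P1 * P2 * ((a - b) * (b - a))) by (unfold P1, P2; ring).
  apply Rmult_pos_neg; [apply Rmult_lt_0_compat; assumption|nra].
Qed.

Lemma same_sign_of_consecutive (d : nat -> R) (k : nat) : (2 <= k)%nat ->
  (forall i, (S i < k)%nat -> 0 < d i * d (S i)) ->
  (forall i, (i < k)%nat -> 0 < d i) \/ (forall i, (i < k)%nat -> d i < 0).
Proof.
  intros Hk H. pose proof (H 0%nat ltac:(lia)) as H0.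
  assert (Hd0 : 0 < d 0%nat \/ d 0%nat < 0).
  { destruct (Rtotal_order (d 0%nat) 0) as [N|[Z|P]]; auto. rewrite Z in H0. lra. }
  destruct Hd0 as [P|N]; [left|right]; intros i Hi;
    (induction i as [|i IH]; [assumption|]); pose proof (H i Hi); pose proof (IH ltac:(lia)); nra.
Qed.

Lemma lagrange_coef_same_sign (q : rpoly) (s : list R) (k : nat) :
  length s = k -> ssorted s k -> alternates (peval q) s k ->
  forall i, (S i < k)%nat -> 0 < lagrange_coef q s i * lagrange_coef q s (S i).
Proof.
  intros Hl Hs Halt i Hi. unfold lagrange_coef.
  pose proof (rprod_rm_alternates s k i Hl Hs Hi) as T. pose proof (Halt i Hi) as A.
  revert T A.
  generalize (rprod (nth i s 0) (rm i s)) (rprod (nth (S i) s 0) (rm (S i) s))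
    (peval q (nth i s 0)) (peval q (nth (S i) s 0)).
  intros u v x y T A.
  assert (u <> 0) by (intros ->; lra). assert (v <> 0) by (intros ->; lra).
  replace (x / u * (y / v)) with ((x * y) * / (u * v)) by (field; auto).
  apply Rmult_neg_neg; [exact A|apply Rinv_lt_0_compat, T].
Qed.

Lemma pfsum_opp (d : nat -> R) (s : list R) (n : nat) (z : C) :
  pfsum (fun i => - d i) s n z = Cmul (RtoC (-1)) (pfsum d s n z).
Proof. unfold pfsum. rewrite Cmul_Csumn. apply Csumn_ext. intros i _. Cring. Qed.

Section RatioOnDiamDisk.

Variables (P q : rpoly) (k : nat) (s : list R) (j : nat).
Hypotheses (Hk : (2 <= k)%nat) (HP : has_degree P k) (Hq : (length q <= k)%nat)
  (Hs : sorted_roots (peval P) k s) (Halt : alternates (peval q) s k) (Hj : (S j < k)%nat).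

Let a := nth j s 0.
Let b := nth (S j) s 0.

Lemma roots_outside_diam_disk (i : nat) : (i < k)%nat -> nth i s 0 <= a \/ b <= nth i s 0.
Proof.
  intros Hi. destruct Hs as [_ [Ss _]]. destruct (Nat.le_gt_cases i j).
  - left. apply (sorted_le s k); auto; lia.
  - right. apply (sorted_le s k); auto; lia.
Qed.

Lemma pevalC_ratio_pfsum (z : C) : diam_disk a b (Some z) ->
  Cnorm2 (cprod z s) <> 0 /\
  pevalC q z = Cmul (cprod z s) (pfsum (lagrange_coef q s) s k z) /\
  pevalC P z = Cmul (cprod z s) (RtoC (lead P)).
Proof.
  intros Hz. destruct Hs as [Ls [Ss Rs]], HP as [HPl HL].
  assert (Hab : a < b) by (apply Ss; exact Hj).
  assert (Hnd : NoDup s) by exact (sorted_NoDup s k Ls Ss).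
  assert (Hnz : forall i, (i < length s)%nat -> Cnorm2 (Csub z (RtoC (nth i s 0))) <> 0)
    by (intros i Hi; apply (Cnorm2_pole_dist a b Hab z); auto; apply roots_outside_diam_disk; lia).
  repeat split.
  - apply Cnorm2_cprod. intros r Hr. destruct (In_nth s r 0 Hr) as [i [Hi <-]]. auto.
  - rewrite <- Ls. apply pevalC_partial_fractions; auto. lia.
  - apply (peval_factor k P s HPl Ls Hnd).
    intros r Hr. destruct (In_nth s r 0 Hr) as [i [Hi <-]]. apply Rs; lia.
Qed.

Lemma ratio_injective_on_diam_disk (z1 z2 : C) :
  diam_disk a b (Some z1) -> diam_disk a b (Some z2) ->
  Cmul (pevalC q z1) (pevalC P z2) = Cmul (pevalC q z2) (pevalC P z1) -> z1 = z2.
Proof.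
  intros D1 D2 Hcross. pose proof Hs as [Ls [Ss _]].
  assert (Hab : a < b) by (apply Ss; exact Hj).
  destruct (pevalC_ratio_pfsum z1 D1) as [N1 [Q1 P1]].
  destruct (pevalC_ratio_pfsum z2 D2) as [N2 [Q2 P2]].
  set (c := lagrange_coef q s).
  assert (Hpf : pfsum c s k z1 = pfsum c s k z2).
  { rewrite Q1, Q2, P1, P2 in Hcross. fold c in Hcross.
    apply (Cmul_cancel_l (Cmul (Cmul (cprod z1 s) (cprod z2 s)) (RtoC (lead P)))).
    - rewrite !Cnorm2_mul. destruct HP as [_ HL].
      apply Rmult_integral_contrapositive; split; [apply Rmult_integral_contrapositive; auto|].
      Cunf. nra.
    - revert Hcross. generalize (cprod z1 s) (cprod z2 s) (pfsum c s k z1) (pfsum c s k z2).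
      intros u v x y E. transitivity (Cmul (Cmul u x) (Cmul v (RtoC (lead P)))); [Cring|].
      rewrite E. Cring. }
  assert (Hleft : exists i, (i < k)%nat /\ nth i s 0 <= a) by (exists j; split; [lia|unfold a; lra]).
  destruct (same_sign_of_consecutive c k Hk (lagrange_coef_same_sign q s k Ls Ss Halt))
    as [Cpos|Cneg].
  - apply (pfsum_injective_on_diam_disk a b Hab c s k); auto. apply roots_outside_diam_disk.
  - apply (pfsum_injective_on_diam_disk a b Hab (fun i => - c i) s k); auto.
    + intros i Hi. specialize (Cneg i Hi). lra.
    + apply roots_outside_diam_disk.
    + rewrite !pfsum_opp, Hpf. reflexivity.
Qed.

End RatioOnDiamDisk.

Lemma ratmap_eq_cross (q p : rpoly) (z1 z2 : C) : ratmap q p (Some z1) = ratmap q p (Some z2) ->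
  Cmul (pevalC q z1) (pevalC p z2) = Cmul (pevalC q z2) (pevalC p z1).
Proof.
  unfold ratmap.
  destruct (Req_EM_T (Cnorm2 (pevalC p z1)) 0) as [E1|E1];
  destruct (Req_EM_T (Cnorm2 (pevalC p z2)) 0) as [E2|E2]; intros H; try discriminate.
  - apply Cnorm2_eq0 in E1, E2. rewrite E1, E2. Cring.
  - assert (Hdiv : Cdiv (pevalC q z1) (pevalC p z1) = Cdiv (pevalC q z2) (pevalC p z2))
      by congruence.
    assert (K : forall u w, Cnorm2 w <> 0 -> u = Cmul (Cdiv u w) w).
    { intros [u1 u2] [w1 w2] Hw. Cunf. apply C_ext; simpl; field; auto. }
    rewrite (K (pevalC q z1) (pevalC p z1) E1), (K (pevalC q z2) (pevalC p z2) E2), Hdiv.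
    Cring.
Qed.

Lemma ratmap_RtoC (q p : rpoly) (x : R) : ratmap q p (Some (RtoC x)) =
  if Req_EM_T (peval p x) 0 then None else Some (RtoC (peval q x / peval p x)).
Proof.
  unfold ratmap. rewrite !pevalC_RtoC.
  destruct (Req_EM_T (Cnorm2 (RtoC (peval p x))) 0) as [E|E];
  destruct (Req_EM_T (peval p x) 0) as [F|F]; auto.
  - exfalso. apply F. Cunf. nra.
  - exfalso. apply E. rewrite F. Cunf. ring.
  - f_equal. Cunf. apply C_ext; simpl; field; auto.
Qed.

Lemma ratmap_eq_of_cross (q p : rpoly) (u v : R) :
  (forall t, peval p t = 0 -> peval q t <> 0) ->
  peval q u * peval p v = peval q v * peval p u ->
  ratmap q p (Some (RtoC u)) = ratmap q p (Some (RtoC v)).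
Proof.
  intros Hcop H. rewrite !ratmap_RtoC.
  destruct (Req_EM_T (peval p u) 0) as [E1|E1];
  destruct (Req_EM_T (peval p v) 0) as [E2|E2]; auto.
  - exfalso. rewrite E1, Rmult_0_r in H.
    apply Rmult_integral in H as [H|H]; [exact (Hcop u E1 H)|exact (E2 H)].
  - exfalso. rewrite E2, Rmult_0_r in H. symmetry in H.
    apply Rmult_integral in H as [H|H]; [exact (Hcop v E2 H)|exact (E1 H)].
  - do 2 f_equal. field_simplify_eq; auto. lra.
Qed.

Lemma cross_ratio_between_roots (P q : rpoly) (a b t : R) : a < b ->
  peval P a = 0 -> peval P b = 0 -> peval q a * peval q b < 0 -> peval P t <> 0 ->
  exists x, a < x < b /\ peval q x * peval P t = peval q t * peval P x.
Proof.
  intros Hab Ha Hb Hq Ht.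
  destruct (IVT_strict (fun x => peval q x * peval P t - peval q t * peval P x) a b)
    as [x [Hx Fx]]; auto.
  - apply continuity_minus; apply continuity_mult;
      try apply continuity_peval; apply continuity_const; intros u v; reflexivity.
  - rewrite Ha, Hb. assert (0 < peval P t * peval P t) by nra. nra.
  - exists x; split; auto. lra.
Qed.

Section MaximalUnivalentDisk.

Variables (p q : rpoly) (k : nat) (alpha : R) (s : list R) (j : nat).
Hypotheses (Hk : (2 <= k)%nat) (Hp : has_degree p k) (Hq : has_degree q (k - 1))
  (Hcop : forall t, peval p t = 0 -> peval q t <> 0)
  (Hs : sorted_roots (peval (pencil p q alpha)) k s) (Halt : alternates (peval q) s k)
  (Hj : (S j < k)%nat).

Let a := nth j s 0.
Let b := nth (S j) s 0.

Lemma diam_disk_injective : injective_on (ratmap q p) (diam_disk a b).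
Proof.
  intros [z1|] [z2|] D1 D2 E; try contradiction. f_equal.
  apply (ratio_injective_on_diam_disk (pencil p q alpha) q k s j); auto.
  - apply pencil_degree; [exact Hp|destruct Hp, Hq; lia].
  - destruct Hq; lia.
  - apply ratmap_eq_cross in E. rewrite !pevalC_pencil.
    revert E. generalize (pevalC q z1) (pevalC q z2) (pevalC p z1) (pevalC p z2).
    intros q1 q2 p1 p2 E.
    transitivity (Cadd (Cmul q1 p2) (Cmul (RtoC alpha) (Cmul q1 q2))); [Cring|].
    rewrite E. Cring.
Qed.

Lemma diam_disk_not_extendable :
  ~ (exists U, is_real_disk U /\ (forall x, diam_disk a b x -> U x) /\
       (exists x, U x /\ ~ diam_disk a b x) /\ injective_on (ratmap q p) U).
Proof.
  intros [U [HU [Hsub [Hx Hinj]]]]. pose proof Hs as [_ [Ss Rs]].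
  assert (Hab : a < b) by (apply Ss; exact Hj).
  destruct (real_disk_reaches_beyond a b U Hab HU Hsub Hx) as [e [t [He [Se [St Ht]]]]].
  assert (Pe : peval (pencil p q alpha) e = 0) by (destruct He as [->| ->]; apply Rs; lia).
  destruct (Req_dec (peval (pencil p q alpha) t) 0) as [Pt|Pt].
  - assert (Eq : ratmap q p (Some (RtoC t)) = ratmap q p (Some (RtoC e))).
    { apply ratmap_eq_of_cross; auto. rewrite peval_pencil in Pe, Pt.
      replace (peval p e) with (- alpha * peval q e) by lra.
      replace (peval p t) with (- alpha * peval q t) by lra. ring. }
    apply Hinj in Eq; auto. injection Eq as Eq. destruct He; subst; lra.
  - destruct (cross_ratio_between_roots (pencil p q alpha) q a b t Hab (Rs j ltac:(lia))
        (Rs (S j) Hj) (Halt j Hj) Pt) as [x [Hxab Hxt]].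
    assert (Eq : ratmap q p (Some (RtoC x)) = ratmap q p (Some (RtoC t))).
    { apply ratmap_eq_of_cross; auto. rewrite !peval_pencil in Hxt. lra. }
    apply Hinj in Eq; [|apply Hsub, diam_disk_real_point; auto|auto].
    injection Eq as Eq. lra.
Qed.

Lemma diam_disk_maximal_univalent : maximal_real_univalent_disk (ratmap q p) (diam_disk a b).
Proof.
  split; [apply diam_disk_is_real_disk, (proj1 (proj2 Hs)), Hj|].
  split; [exact diam_disk_injective|exact diam_disk_not_extendable].
Qed.

End MaximalUnivalentDisk.

Lemma sorted_roots_pencil (p q : rpoly) (alpha : R) (k : nat) (rs : list R) :
  sorted_roots (fun x => peval p x + alpha * peval q x) k rs <->
  sorted_roots (peval (pencil p q alpha)) k rs.
Proof.
  unfold sorted_roots. split; intros [H1 [H2 H3]]; repeat split; auto;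
    intros i Hi; specialize (H3 i Hi); rewrite peval_pencil in *; exact H3.
Qed.

Theorem theorem2 (k : nat) (p q : rpoly) :
  (2 <= k)%nat ->
  has_degree p k -> has_degree q (k - 1) ->
  strictly_interlacing p q k ->
  forall alpha : R,
    (exists rs, sorted_roots (fun x => peval p x + alpha * peval q x) k rs) /\
    (forall rs, sorted_roots (fun x => peval p x + alpha * peval q x) k rs ->
       forall j, (S j < k)%nat ->
         maximal_real_univalent_disk (ratmap q p)
           (diam_disk (nth j rs 0) (nth (S j) rs 0))).
Proof.
  intros Hk Hp Hq [xs [ys [Hxs [Hys Hint]]]] alpha.
  destruct (pencil_roots_alternate p q k xs ys Hk Hp Hq Hxs Hys Hint alpha) as [s [Hs Halt]].
  split; [exists s; apply sorted_roots_pencil, Hs|].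
  intros rs Hrs j Hj. apply sorted_roots_pencil in Hrs.
  assert (HP : has_degree (pencil p q alpha) k)
    by (apply pencil_degree; [exact Hp|destruct Hp, Hq; lia]).
  rewrite <- (sorted_roots_unique (pencil p q alpha) k s rs (proj1 HP) (proj2 HP) Hs Hrs).
  apply (diam_disk_maximal_univalent p q k alpha); auto.
  exact (interlacing_coprime p q k xs ys Hk Hp Hq Hxs Hys Hint).
Qed.
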